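(* Let $B \subset \mathbb{R}^3$ be an open ball and let $\hat{P}' \in \mathbb{R}^3 \setminus B$. If $\hat{P} \in C^-(B,\hat{P}')$, then $C^-(B,\hat{P}) \subset C^-(B,\hat{P}')$.
   Context: For a bounded convex set $B \subset \mathbb{R}^3$ and a point $Q \in \mathbb{R}^3$ with $Q \notin B$, the negative half-cone $C^-(B,Q)$ is the set of points $Y \in \mathbb{R}^3 \setminus \mathrm{cl}(B)$ for which there exist $x' \in B$ and $0 < \alpha < 1$ such that $Y - Q = -\alpha (Q - x')$. Here $\mathrm{cl}(S)$ denotes the topological closure of $S$. *)

From HB Require Import structures.
From mathcomp Require Import all_boot all_order all_algebra.
From mathcomp Require Import all_classical all_reals all_analysis.
Set Implicit Arguments. Unset Strict Implicit. Unset Printing Implicit Defensive.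
Import Order.TTheory GRing.Theory Num.Theory.
Import numFieldNormedType.Exports.
Local Open Scope classical_set_scope.
Local Open Scope ring_scope.

(* Points of R^3 are row vectors 'rV[R]_3; the topology (used for closure)
   is the canonical product/normed topology of 'rV[R]_3, which coincides with
   the Euclidean topology. *)

Definition eucl_dist (R : realType) (x y : 'rV[R]_3) : R :=
  Num.sqrt (\sum_(i < 3) (x ord0 i - y ord0 i) ^+ 2).

Definition open_ball (R : realType) (c : 'rV[R]_3) (r : R) : set 'rV[R]_3 :=
  [set x | eucl_dist x c < r].

Definition neg_half_cone (R : realType) (B : set 'rV[R]_3) (Q : 'rV[R]_3)
  : set 'rV[R]_3 :=
  [set Y | ~ closure B Y /\
     exists x', B x' /\ exists alpha : R, 0 < alpha < 1 /\
       Y - Q = - (alpha *: (Q - x'))].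

From HB Require Import structures.
From mathcomp Require Import all_boot all_order all_algebra.
From mathcomp Require Import all_classical all_reals all_analysis.
From mathcomp Require Import ring lra.
Import Order.TTheory GRing.Theory Num.Theory.
Import numFieldNormedType.Exports.
Set Implicit Arguments. Unset Strict Implicit. Unset Printing Implicit Defensive.
Local Open Scope classical_set_scope.
Local Open Scope ring_scope.

(* Since [Y - Q = - alpha (Q - x')] means [Y = (1 - alpha) Q + alpha x'],
   C^-(B, Q) consists of the points outside cl(B) lying on an open segment
   from Q to a point of B.  If [P = (1 - a) P' + a x] and [Y = (1 - b) P + b y]
   with x, y in B, then [Y = (1 - g) P' + g z] where [g = 1 - (1 - a)(1 - b)]
   lies in (0, 1) and z is a convex combination of x and y, hence in B. *)

Section segments.
Variables (R : realFieldType) (V : lmodType R).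

Lemma subr_eq_oppZ_conv (Y Q x : V) (a : R) :
  Y - Q = - (a *: (Q - x)) <-> Y = (1 - a) *: Q + a *: x.
Proof.
have -> : (1 - a) *: Q + a *: x = - (a *: (Q - x)) + Q.
  by rewrite scalerBl scale1r scalerBr opprB [RHS]addrC addrA addrAC.
by split=> [<-|->]; rewrite ?subrK ?addrK.
Qed.

Lemma conv_conv_factor (p x y : V) (a b : R) :
  0 < a < 1 -> 0 < b < 1 ->
  exists2 g, 0 < g < 1 & exists2 s, 0 <= s <= 1 &
    (1 - b) *: ((1 - a) *: p + a *: x) + b *: y
    = (1 - g) *: p + g *: (s *: x + (1 - s) *: y).
Proof.
move=> /andP[a0 a1] /andP[b0 b1].
set g := 1 - (1 - b) * (1 - a).
have g0 : 0 < g by rewrite /g; nra.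
have gN0 : g != 0 by rewrite gt_eqF.
exists g; first by apply/andP; split; rewrite /g; nra.
exists ((1 - b) * a / g).
  apply/andP; split; first by rewrite divr_ge0 //; nra.
  by rewrite ler_pdivrMr // mul1r /g; nra.
have gs : g * ((1 - b) * a / g) = (1 - b) * a by rewrite mulrC mulfVK.
have gsC : g * (1 - (1 - b) * a / g) = b by rewrite mulrBr mulr1 gs /g; ring.
have gC : 1 - g = (1 - b) * (1 - a) by rewrite /g; ring.
by rewrite !scalerDr !scalerA gs gsC gC addrA.
Qed.

End segments.

Lemma sqr_conv_le (R : realDomainType) (s a b : R) : 0 <= s <= 1 ->
  (s * a + (1 - s) * b) ^+ 2 <= s * a ^+ 2 + (1 - s) * b ^+ 2.
Proof.
move=> /andP[s0 s1]; rewrite -subr_ge0.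
have -> : s * a ^+ 2 + (1 - s) * b ^+ 2 - (s * a + (1 - s) * b) ^+ 2
          = s * (1 - s) * (a - b) ^+ 2 by ring.
by rewrite mulr_ge0 ?sqr_ge0 // mulr_ge0 ?subr_ge0.
Qed.

Lemma sum_sqr_conv_le (R : realDomainType) (I : finType) (s : R) (a b : I -> R) :
  0 <= s <= 1 ->
  \sum_i (s * a i + (1 - s) * b i) ^+ 2
    <= s * \sum_i a i ^+ 2 + (1 - s) * \sum_i b i ^+ 2.
Proof.
move=> s01; rewrite !mulr_sumr -big_split /=.
by apply: ler_sum => i _; exact: sqr_conv_le.
Qed.

Lemma eucl_dist_conv_le (R : realType) (c x y : 'rV[R]_3) (s : R) :
  0 <= s <= 1 ->
  eucl_dist (s *: x + (1 - s) *: y) c <= Num.max (eucl_dist x c) (eucl_dist y c).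
Proof.
move=> s01; rewrite /eucl_dist.
set A := \sum_(i < 3) (x ord0 i - c ord0 i) ^+ 2.
set B := \sum_(i < 3) (y ord0 i - c ord0 i) ^+ 2.
have le_conv : \sum_(i < 3) ((s *: x + (1 - s) *: y) ord0 i - c ord0 i) ^+ 2
               <= s * A + (1 - s) * B.
  rewrite (eq_bigr (fun i => (s * (x ord0 i - c ord0 i)
                              + (1 - s) * (y ord0 i - c ord0 i)) ^+ 2)).
    exact: sum_sqr_conv_le.
  by move=> i _; rewrite !mxE; congr (_ ^+ 2); ring.
have [A0 B0] : 0 <= A /\ 0 <= B by split; apply: sumr_ge0 => i _; exact: sqr_ge0.
case/andP: s01 => s0 s1; rewrite le_max !ler_sqrt //.
case/orP: (le_total A B) => [AB|BA].
- have sAB : s * (A - B) <= 0 by rewrite mulr_ge0_le0 // subr_le0.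
  by apply/orP; right; apply: le_trans le_conv _; lra.
- have sBA : (1 - s) * (B - A) <= 0 by rewrite mulr_ge0_le0 // ?subr_ge0 ?subr_le0.
  by apply/orP; left; apply: le_trans le_conv _; lra.
Qed.

Lemma open_ball_conv (R : realType) (c x y : 'rV[R]_3) (r s : R) :
  0 <= s <= 1 -> open_ball c r x -> open_ball c r y ->
  open_ball c r (s *: x + (1 - s) *: y).
Proof.
move=> s01 xB yB; apply: le_lt_trans (eucl_dist_conv_le c x y s01) _.
by rewrite gt_max; apply/andP.
Qed.

Section neg_half_cone.
Variables (R : realType) (B : set 'rV[R]_3).
Hypothesis B_conv : forall (x y : 'rV[R]_3) (s : R),
  0 <= s <= 1 -> B x -> B y -> B (s *: x + (1 - s) *: y).

Lemma neg_half_cone_trans (Q P : 'rV[R]_3) :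
  neg_half_cone B Q P -> neg_half_cone B P `<=` neg_half_cone B Q.
Proof.
move=> [_ [x [xB [a [a01 /subr_eq_oppZ_conv eP]]]]].
move=> Y [Ycl [y [yB [b [b01 /subr_eq_oppZ_conv eY]]]]].
split=> //.
have [g g01 [s s01 eYg]] := conv_conv_factor Q x y a01 b01.
exists (s *: x + (1 - s) *: y); split; first exact: B_conv.
exists g; split=> //; apply/subr_eq_oppZ_conv.
by rewrite eY eP eYg.
Qed.

End neg_half_cone.

Theorem proposition3 (R : realType) (c : 'rV[R]_3) (r : R) (Pp P : 'rV[R]_3) :
  0 < r ->
  ~ open_ball c r Pp ->
  neg_half_cone (open_ball c r) Pp P ->
  neg_half_cone (open_ball c r) P `<=` neg_half_cone (open_ball c r) Pp.
Proof.
move=> _ _; apply: neg_half_cone_trans => x y s s01.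
exact: open_ball_conv.
Qed.
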